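(* Let $\mathbf{A}\in\mathbb{C}^{n\times n}$ be nonsingular, $\mathbf{b}\in\mathbb{C}^n$ nonzero, and $k\ge1$ such that $\dim\mathcal{K}_{k+1}(\mathbf{A},\mathbf{b})=k+1$. Then \[ \min_{0\leq j\leq k}\|\mathbf{A}^{-1}\mathbf{b}-\mathbf{x}_j^{\mathrm F}\|_2\;\leq\;\sqrt{k+1}\,\cdot\,\kappa(\mathbf{A})\,\cdot\,\|\mathbf{A}^{-1}\mathbf{b}-\mathbf{x}_k^{\mathrm G}\|_2, \] where $\kappa(\mathbf{A})=\|\mathbf{A}\|_2\|\mathbf{A}^{-1}\|_2$.
   Context: The Krylov subspace is $\mathcal{K}_k(\mathbf{A},\mathbf{b})=\operatorname{span}\{\mathbf{b},\mathbf{A}\mathbf{b},\dots,\mathbf{A}^{k-1}\mathbf{b}\}$. The Arnoldi algorithm produces an orthonormal basis $\mathbf{Q}_k=[\mathbf{q}_1,\dots,\mathbf{q}_k]$ of $\mathcal{K}_k(\mathbf{A},\mathbf{b})$ with $\mathbf{q}_1=\mathbf{b}/\|\mathbf{b}\|_2$, and a $(k+1)\times k$ upper Hessenberg matrix $\mathbf{H}_{k+1,k}$ (entries $h_{i,j}$, with $h_{j+1,j}>0$) satisfying $\mathbf{A}\mathbf{Q}_k=\mathbf{Q}_{k+1}\mathbf{H}_{k+1,k}$; $\mathbf{H}_k$ denotes $\mathbf{H}_{k+1,k}$ with its last row deleted. With $\mathbf{e}_1=[1,0,\dots,0]^{\mathsf T}$, the FOM and GMRES iterates (zero initial guess, $\mathbf{x}_0^{\mathrm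 F}=\mathbf{x}_0^{\mathrm G}=\mathbf{0}$) are, for $j\ge1$, $\mathbf{x}_j^{\mathrm F}=\|\mathbf{b}\|_2\mathbf{Q}_j\mathbf{H}_j^{-1}\mathbf{e}_1$ and $\mathbf{x}_j^{\mathrm G}=\|\mathbf{b}\|_2\mathbf{Q}_j\mathbf{H}_{j+1,j}^{\dagger}\mathbf{e}_1$ ($\dagger$ = pseudoinverse); equivalently $\mathbf{x}_j^{\mathrm G}$ minimizes $\|\mathbf{b}-\mathbf{A}\mathbf{x}\|_2$ over $\mathbf{x}\in\mathcal{K}_j(\mathbf{A},\mathbf{b})$. Convention: if $\mathbf{H}_j$ is singular, the FOM iterate $\mathbf{x}_j^{\mathrm F}$ is undefined and its error norm $\|\mathbf{A}^{-1}\mathbf{b}-\mathbf{x}_j^{\mathrm F}\|_2$ is defined to be $+\infty$. *)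

From HB Require Import structures.
From mathcomp Require Import all_boot all_order all_algebra.
From mathcomp Require Import complex.
From mathcomp Require Import classical_sets reals constructive_ereal.
Set Implicit Arguments. Unset Strict Implicit. Unset Printing Implicit Defensive.
Import Order.TTheory GRing.Theory Num.Theory.
Local Open Scope ring_scope.

Section Krylov.
Variable R : realType.
Local Notation C := R[i].

Definition cmod (z : C) : R := complex.Re `|z|.

Definition vnorm n (v : 'cV[C]_n) : R :=
  Num.sqrt (\sum_(i < n) cmod (v i 0) ^+ 2).

Definition cdot n (u v : 'cV[C]_n) : C := \sum_(i < n) (u i 0)^* * v i 0.

Definition opnorm m n (M : 'M[C]_(m, n)) : R :=
  sup [set vnorm (M *m x) | x in [set x : 'cV[C]_n | vnorm x = 1]].

Definition kappa n (A : 'M[C]_n) : R := opnorm A * opnorm (invmx A).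

(* Krylov matrix [b, Ab, ..., A^(j-1) b]; its column space is K_j(A,b) *)
Definition krylov_mx n (A : 'M[C]_n) (b : 'cV[C]_n) (j : nat) : 'M[C]_(n, j) :=
  \matrix_(i < n, l < j) ((A ^+ l) *m b) i 0.

Definition in_krylov n (A : 'M[C]_n) (b : 'cV[C]_n) (j : nat) (x : 'cV[C]_n) :=
  exists c : 'cV[C]_j, x = krylov_mx A b j *m c.

(* Arnoldi output after k steps (0-indexed): vectors q 0, ..., q k
   (= q_1, ..., q_{k+1} of the paper) and entries h i l
   (= h_{i+1,l+1}, i <= k, l < k) of the (k+1) x k upper Hessenberg matrix
   H_{k+1,k}, such that the q's are orthonormal, q 0 = b/||b||_2,
   the subdiagonal entries are (real) positive and A Q_k = Q_{k+1} H_{k+1,k}. *)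
Definition arnoldi n (A : 'M[C]_n) (b : 'cV[C]_n) (k : nat)
    (q : nat -> 'cV[C]_n) (h : nat -> nat -> C) : Prop :=
  [/\ q 0%N = (((vnorm b)%:C)%C)^-1 *: b,
      (forall i l, (i <= k)%N -> (l <= k)%N ->
          cdot (q i) (q l) = (i == l)%:R),
      (forall i l, (l < k)%N -> (l.+1 < i)%N -> h i l = 0),
      (forall l, (l < k)%N -> 0 < h l.+1 l) &
      (forall l, (l < k)%N -> A *m q l = \sum_(i < k.+1) h i l *: q i)].

Definition Qmx n (q : nat -> 'cV[C]_n) (j : nat) : 'M[C]_(n, j) :=
  \matrix_(i < n, l < j) q l i 0.

Definition Hmx (h : nat -> nat -> C) (j : nat) : 'M[C]_j :=
  \matrix_(i < j, l < j) h i l.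

Definition e1 (j : nat) : 'cV[C]_j := \col_(i < j) ((i == 0%N :> nat)%:R).

(* FOM iterate x_j^F = ||b||_2 Q_j H_j^-1 e_1 (meaningful when H_j is
   nonsingular); x_0^F = 0 *)
Definition fom_iterate n (b : 'cV[C]_n) (q : nat -> 'cV[C]_n)
    (h : nat -> nat -> C) (j : nat) : 'cV[C]_n :=
  ((vnorm b)%:C)%C *: (Qmx q j *m (invmx (Hmx h j) *m e1 j)).

Definition fom_err n (A : 'M[C]_n) (b : 'cV[C]_n) (q : nat -> 'cV[C]_n)
    (h : nat -> nat -> C) (j : nat) : \bar R :=
  if j == 0%N then (vnorm (invmx A *m b))%:E
  else if Hmx h j \in unitmx then
    (vnorm (invmx A *m b - fom_iterate b q h j))%:E
  else +oo%E.

Definition is_gmres_iterate n (A : 'M[C]_n) (b : 'cV[C]_n) (j : nat)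
    (x : 'cV[C]_n) : Prop :=
  in_krylov A b j x /\
  forall y, in_krylov A b j y -> vnorm (b - A *m x) <= vnorm (b - A *m y).

End Krylov.

From HB Require Import structures.
From mathcomp Require Import all_boot all_order all_algebra.
From mathcomp Require Import complex sesquilinear.
From mathcomp Require Import classical_sets reals constructive_ereal.
Import Order.TTheory GRing.Theory Num.Theory.
Local Open Scope ring_scope.
Set Implicit Arguments. Unset Strict Implicit. Unset Printing Implicit Defensive.

(** Let g_m be the left null vector of H_(m+1,m) normalised by g_m(0) = 1.
  The vector w_m = Q_(m+1) conj(g_m) is orthogonal to A K_m(A,b) and has
  (w_m, b) = ||b||.  The FOM residual r_m^F lies in K_(m+1) and is orthogonal
  to K_m, hence is a multiple of the last Arnoldi vector of K_(m+1); pairing it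
  with w_m gives |g_m(m)| ||r_m^F|| = ||b||, and H_m is nonsingular as soon as
  g_m(m) <> 0.  The g_m extend one another, so pairing w_k with the GMRES
  residual gives ||b|| <= ||g_k|| ||r_k^G|| <= sqrt(k+1) max_j |g_k(j)| ||r_k^G||.
  At a maximising index j the FOM residual is thus at most sqrt(k+1) ||r_k^G||,
  and r = A e turns this into the error bound at the cost of kappa(A). *)

Lemma sumr_ord_trunc (V : nmodType) (F : nat -> V) m p : (m <= p)%N ->
  (forall i, (m <= i < p)%N -> F i = 0) ->
  \sum_(i < p) F i = \sum_(i < m) F i.
Proof.
move=> mp F0; rewrite -!(big_mkord xpredT F) (big_cat_nat _ mp) //=.
rewrite [X in _ + X]big_nat_cond [X in _ + X]big1 ?addr0 // => i /andP[+ _].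
exact: F0.
Qed.

Lemma sumr_delta (T : pzSemiRingType) (F : nat -> T) m i :
  \sum_(l < m) F l * (i == l :> nat)%:R = if (i < m)%N then F i else 0.
Proof.
elim: m => [|m IH]; first by rewrite big_ord0 ltn0.
rewrite big_ord_recr /= IH ltnS.
by case: ltngtP => [lt|gt|->]; rewrite ?mulr0 ?addr0 ?mulr1 ?add0r ?leqnn.
Qed.

Lemma sqrt_sum_sqr_le (R : rcfType) N (a : 'I_N -> R) (c : R) :
  (forall i, `|a i| <= c) -> Num.sqrt (\sum_i a i ^+ 2) <= Num.sqrt N%:R * c.
Proof.
case: N a => [|N] a ac; first by rewrite big_ord0 sqrtr0 mul0r.
have c0 : 0 <= c := le_trans (normr_ge0 _) (ac ord0).
rewrite -[c in _ * c]ger0_norm // -sqrtr_sqr -sqrtrM ?ler0n //.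
rewrite ler_sqrt ?mulr_ge0 ?ler0n ?sqr_ge0 //.
rewrite mulr_natl -[in X in _ *+ X](card_ord N.+1) -sumr_const.
apply: ler_sum => i _.
by rewrite -real_normK ?num_real // lerXn2r ?nnegrE ?normr_ge0.
Qed.

Section ComplexVectors.
Variable R : realType.
Local Notation C := R[i].

Lemma cmodE (z : C) : ((cmod z)%:C)%C = `|z|.
Proof. by rewrite /cmod normc_def. Qed.

Lemma cmod_ge0 (z : C) : 0 <= cmod z.
Proof. by rewrite -ler0c cmodE normr_ge0. Qed.

Lemma cmod_eq0 (z : C) : (cmod z == 0) = (z == 0).
Proof. by rewrite -(inj_eq (@complexI _)) cmodE normr_eq0. Qed.

Lemma cmodM (x y : C) : cmod (x * y) = cmod x * cmod y.
Proof. by apply: complexI; rewrite rmorphM /= !cmodE normrM. Qed.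

Lemma cmodR (r : R) : cmod ((r%:C)%C) = `|r|.
Proof. by apply: complexI; rewrite cmodE normc_def /= expr0n addr0 sqrtr_sqr. Qed.

Lemma cmod_sqr (z : C) : (((cmod z) ^+ 2)%:C)%C = z^* * z.
Proof. by rewrite rmorphXn /= cmodE normCKC. Qed.

Lemma vnorm_ge0 m (v : 'cV[C]_m) : 0 <= vnorm v.
Proof. exact: sqrtr_ge0. Qed.

Lemma vnorm_sqr m (v : 'cV[C]_m) : vnorm v ^+ 2 = \sum_i cmod (v i 0) ^+ 2.
Proof. by rewrite sqr_sqrtr // sumr_ge0 // => i _; exact: sqr_ge0. Qed.

Lemma cdot_vv m (v : 'cV[C]_m) : cdot v v = ((vnorm v ^+ 2)%:C)%C.
Proof.
by rewrite vnorm_sqr rmorph_sum /cdot; apply: eq_bigr => i _; rewrite /= cmod_sqr.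
Qed.

Lemma vnorm_cdot m (v : 'cV[C]_m) (a : R) :
  0 <= a -> cdot v v = ((a ^+ 2)%:C)%C -> vnorm v = a.
Proof.
move=> a0; rewrite cdot_vv => /complexI /eqP.
by rewrite eqrXn2 ?vnorm_ge0 // => /eqP.
Qed.

Lemma vnorm_eq0 m (v : 'cV[C]_m) : (vnorm v == 0) = (v == 0).
Proof.
apply/idP/eqP=> [|->]; last first.
  by rewrite /vnorm big1 ?sqrtr0 // => i _; rewrite mxE cmodR normr0 expr0n.
rewrite -sqrf_eq0 vnorm_sqr psumr_eq0 => [/allP v0|i _]; last first.
  exact: sqr_ge0.
apply/matrixP=> i j; rewrite (ord1 j) mxE; apply/eqP.
by rewrite -cmod_eq0 -sqrf_eq0 (implyP (v0 i (mem_index_enum _))).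
Qed.

Lemma cdotDr m (u v w : 'cV[C]_m) : cdot u (v + w) = cdot u v + cdot u w.
Proof.
by rewrite /cdot -big_split; apply: eq_bigr => i _; rewrite mxE mulrDr.
Qed.

Lemma cdotBr m (u v w : 'cV[C]_m) : cdot u (v - w) = cdot u v - cdot u w.
Proof. by rewrite /cdot -sumrB; apply: eq_bigr => i _; rewrite !mxE mulrBr. Qed.

Lemma cdotZr m (u v : 'cV[C]_m) a : cdot u (a *: v) = a * cdot u v.
Proof. by rewrite /cdot mulr_sumr; apply: eq_bigr => i _; rewrite mxE mulrCA. Qed.

Lemma cdotZl m (u v : 'cV[C]_m) a : cdot (a *: u) v = a^* * cdot u v.
Proof.
by rewrite /cdot mulr_sumr; apply: eq_bigr => i _; rewrite mxE rmorphM mulrA.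
Qed.

Lemma cdot0r m (u : 'cV[C]_m) : cdot u 0 = 0.
Proof. by rewrite /cdot big1 // => i _; rewrite mxE mulr0. Qed.

Lemma cdot_sumr m (u : 'cV[C]_m) I (r : seq I) (P : pred I) (F : I -> 'cV[C]_m) :
  cdot u (\sum_(i <- r | P i) F i) = \sum_(i <- r | P i) cdot u (F i).
Proof. by elim/big_rec2: _ => [|i y1 y2 _ <-]; rewrite ?cdot0r ?cdotDr. Qed.

Lemma cdot_suml m (u : 'cV[C]_m) I (r : seq I) (P : pred I) (F : I -> 'cV[C]_m) :
  cdot (\sum_(i <- r | P i) F i) u = \sum_(i <- r | P i) cdot (F i) u.
Proof.
rewrite /cdot exchange_big /=; apply: eq_bigr => j _.
by rewrite summxE rmorph_sum mulr_suml.
Qed.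

Lemma vnormZ m (v : 'cV[C]_m) a : vnorm (a *: v) = cmod a * vnorm v.
Proof.
apply: vnorm_cdot; first by rewrite mulr_ge0 ?cmod_ge0 ?vnorm_ge0.
by rewrite cdotZl cdotZr cdot_vv mulrA -cmod_sqr -rmorphM exprMn.
Qed.

(* [cdot] is conjugate-linear in its first argument, whereas dot products in
   [sesquilinear] are linear in the first one, hence the flip. *)
Definition cdot_flip m (u v : 'cV[C]_m) : C := cdot v u.

Section CdotFlip.
Variable m : nat.

Lemma cdot_flip_bilinear :
  isBilinear C 'cV[C]_m 'cV[C]_m C *%R (Num.conj \; *%R) (@cdot_flip m).
Proof.
constructor=> [v u w|u v w|v a u|u a v]; rewrite /cdot_flip.
- by rewrite cdotBr.
- by rewrite /cdot -sumrB; apply: eq_bigr => i _; rewrite !mxE rmorphB mulrBl.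
- by rewrite cdotZr.
- by rewrite cdotZl.
Qed.
HB.instance Definition _ := cdot_flip_bilinear.

Lemma cdot_flip_hermitian :
  isHermitianSesquilinear C 'cV[C]_m false Num.conj (@cdot_flip m).
Proof.
constructor=> u v; rewrite expr0 mul1r /cdot_flip /cdot rmorph_sum.
by apply: eq_bigr => i _; rewrite rmorphM /= conjCK mulrC.
Qed.
HB.instance Definition _ := cdot_flip_hermitian.

Lemma cdot_flip_dot : isDotProduct C 'cV[C]_m (@cdot_flip m).
Proof.
constructor=> u u0; rewrite /cdot_flip cdot_vv ltcR exprn_gt0 //.
by rewrite lt_def vnorm_eq0 u0 vnorm_ge0.
Qed.
HB.instance Definition _ := cdot_flip_dot.

End CdotFlip.

Lemma cdot_cauchy_schwarz m (u v : 'cV[C]_m) :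
  cmod (cdot u v) <= vnorm u * vnorm v.
Proof.
have sqrtC_vv (w : 'cV[C]_m) : sqrtC (cdot_flip w w) = ((vnorm w)%:C)%C.
  by rewrite /cdot_flip cdot_vv rmorphXn sqrCK // ler0c vnorm_ge0.
have [+ _] := CauchySchwarz_sqrt (@cdot_flip m) v u.
by rewrite /= !sqrtC_vv /cdot_flip -cmodE -rmorphM /= lecR mulrC.
Qed.

Lemma vnorm_mulmx_bounded m p (M : 'M[C]_(m, p)) :
  exists c, forall x, vnorm (M *m x) <= c * vnorm x.
Proof.
pose row_adj i : 'cV[C]_p := \col_j (M i j)^*.
exists (Num.sqrt (\sum_i vnorm (row_adj i) ^+ 2)) => x.
rewrite -ler_sqr ?nnegrE ?mulr_ge0 ?vnorm_ge0 ?sqrtr_ge0 //.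
rewrite vnorm_sqr exprMn sqr_sqrtr ?sumr_ge0 // => [|i _]; last exact: sqr_ge0.
rewrite mulr_suml; apply: ler_sum => i _.
have -> : (M *m x) i 0 = cdot (row_adj i) x.
  by rewrite mxE; apply: eq_bigr => j _; rewrite mxE conjCK.
rewrite -exprMn ler_sqr ?nnegrE ?cmod_ge0 ?mulr_ge0 ?vnorm_ge0 //.
exact: cdot_cauchy_schwarz.
Qed.

Lemma vnorm_mulmx_le m p (M : 'M[C]_(m, p)) x :
  vnorm (M *m x) <= opnorm M * vnorm x.
Proof.
have [c Mc] := vnorm_mulmx_bounded M.
set S := [set vnorm (M *m y) | y in [set y | vnorm y = 1]]%classic.
have S_ub : has_ubound S by exists c => _ [y /= y1 <-]; rewrite -[c]mulr1 -y1.
have [x0|x_neq0] := eqVneq (vnorm x) 0.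
  by have := Mc x; rewrite x0 !mulr0.
have x_gt0 : 0 < vnorm x by rewrite lt_def x_neq0 vnorm_ge0.
have Sx : S (vnorm (M *m (((vnorm x)^-1)%:C%C *: x))).
  exists (((vnorm x)^-1)%:C%C *: x) => //=.
  by rewrite vnormZ cmodR gtr0_norm ?invr_gt0 // mulVf.
have := ub_le_sup S_ub Sx.
by rewrite -scalemxAr vnormZ cmodR gtr0_norm ?invr_gt0 // mulrC ler_pdivrMr.
Qed.

Lemma opnorm_ge0 m p (M : 'M[C]_(m, p)) (u : 'cV[C]_p) :
  vnorm u = 1 -> 0 <= opnorm M.
Proof.
move=> u1; apply: le_trans (vnorm_ge0 (M *m u)) _.
by rewrite -[X in _ <= X]mulr1 -u1 vnorm_mulmx_le.
Qed.

End ComplexVectors.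

Section Arnoldi.
Variable R : realType.
Local Notation C := R[i].
Variables (n : nat) (A : 'M[C]_n) (b : 'cV[C]_n) (k : nat)
  (q : nat -> 'cV[C]_n) (h : nat -> nat -> C).
Hypothesis arn : arnoldi A b k q h.

Local Notation beta := (vnorm b).

Lemma arnoldi_cdot_q i l : (i <= k)%N -> (l <= k)%N ->
  cdot (q i) (q l) = (i == l)%:R.
Proof. by case: arn => _ qon _ _ _; exact: qon. Qed.

Lemma arnoldi_h_eq0 i l : (l < k)%N -> (l.+1 < i)%N -> h i l = 0.
Proof. by case: arn => _ _ h0 _ _; exact: h0. Qed.

Lemma arnoldi_h_gt0 l : (l < k)%N -> 0 < h l.+1 l.
Proof. by case: arn => _ _ _ hpos _; exact: hpos. Qed.

Lemma arnoldi_mulmx l : (l < k)%N -> A *m q l = \sum_(i < k.+1) h i l *: q i.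
Proof. by case: arn => _ _ _ _ Aq; exact: Aq. Qed.

Lemma vnorm_q i : (i <= k)%N -> vnorm (q i) = 1.
Proof. by move=> ik; apply: vnorm_cdot; rewrite ?arnoldi_cdot_q ?eqxx ?expr1n. Qed.

Lemma vnorm_b_gt0 : 0 < beta.
Proof.
rewrite lt_def vnorm_ge0 vnorm_eq0 andbT; apply/eqP => b0.
have := arnoldi_cdot_q (leq0n k) (leq0n k); case: arn => -> _ _ _ _.
by rewrite b0 scaler0 cdot0r eqxx => /eqP; rewrite eq_sym oner_eq0.
Qed.

Lemma b_scale_q0 : b = beta%:C%C *: q 0.
Proof.
case: arn => q0 _ _ _ _; rewrite q0 scalerA mulfV ?scale1r //.
by rewrite eq_complex /= eqxx andbT gt_eqF ?vnorm_b_gt0.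
Qed.

Lemma cdot_q_lincomb m (s : nat -> C) p : (m <= k.+1)%N -> (p <= k)%N ->
  cdot (q p) (\sum_(l < m) s l *: q l) = if (p < m)%N then s p else 0.
Proof.
move=> mk pk; rewrite cdot_sumr -sumr_delta; apply: eq_bigr => l _.
by rewrite cdotZr arnoldi_cdot_q // -ltnS (leq_trans (ltn_ord l)).
Qed.

Definition in_span m (x : 'cV[C]_n) :=
  exists s : nat -> C, x = \sum_(l < m) s l *: q l.

Lemma in_span_expand m x : (m <= k.+1)%N -> in_span m x ->
  x = \sum_(l < m) cdot (q l) x *: q l.
Proof.
move=> mk [s ->]; apply: eq_bigr => l _.
by rewrite cdot_q_lincomb ?ltn_ord // -ltnS (leq_trans (ltn_ord l)).
Qed.

Lemma in_span_sum m I (r : seq I) (P : pred I) (F : I -> 'cV[C]_n) :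
  (forall i, P i -> in_span m (F i)) -> in_span m (\sum_(i <- r | P i) F i).
Proof.
move=> Fspan; elim/big_rec: _ => [|i x Pi [t ->]].
  by exists (fun=> 0); rewrite big1 // => l _; rewrite scale0r.
have [s ->] := Fspan i Pi; exists (fun l => s l + t l).
by rewrite -big_split; apply: eq_bigr => l _; rewrite scalerDl.
Qed.

Lemma in_spanZ m a x : in_span m x -> in_span m (a *: x).
Proof.
move=> [s ->]; exists (fun l => a * s l).
by rewrite scaler_sumr; apply: eq_bigr => l _; rewrite scalerA.
Qed.

Lemma in_spanB m x y : in_span m x -> in_span m y -> in_span m (x - y).
Proof.
move=> [s ->] [t ->]; exists (fun l => s l - t l).
by rewrite -sumrB; apply: eq_bigr => l _; rewrite scalerBl.
Qed.

Lemma in_span_widen m m' x : (m <= m')%N -> in_span m x -> in_span m' x.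
Proof.
move=> mm' [s ->]; exists (fun l => if (l < m)%N then s l else 0).
rewrite (@sumr_ord_trunc _ (fun l => (if (l < m)%N then s l else 0) *: q l) m)
  => [|//|i /andP[mi _]]; last by rewrite ltnNge mi scale0r.
by apply: eq_bigr => l _; rewrite ltn_ord.
Qed.

Lemma in_span_q l m : (l < m)%N -> in_span m (q l).
Proof.
move=> lm; exists (fun i => (i == l)%:R); rewrite (bigD1 (Ordinal lm)) //=.
rewrite eqxx scale1r big1 ?addr0 // => i il.
rewrite (_ : (i == l :> nat) = false) ?scale0r //.
by apply/negbTE/(contra_neq _ il) => il'; exact: val_inj.
Qed.

Lemma in_span_b : in_span 1 b.
Proof. by rewrite b_scale_q0; exact/in_spanZ/in_span_q. Qed.

Lemma in_span_Aq l : (l < k)%N -> in_span l.+2 (A *m q l).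
Proof.
move=> lk; exists (fun i => h i l); rewrite arnoldi_mulmx //.
apply: (@sumr_ord_trunc _ (fun i => h i l *: q i)) => // i /andP[li _].
by rewrite arnoldi_h_eq0 ?scale0r.
Qed.

Lemma in_span_mulmx m x : (m <= k)%N -> in_span m x -> in_span m.+1 (A *m x).
Proof.
move=> mk [s ->]; rewrite mulmx_sumr; apply: in_span_sum => l _.
rewrite -scalemxAr; apply/in_spanZ/(in_span_widen (ltn_ord l : l.+2 <= m.+1)%N).
exact/in_span_Aq/(leq_trans (ltn_ord l) mk).
Qed.

Lemma in_span_krylov_vec l : (l <= k)%N -> in_span l.+1 (A ^+ l *m b).
Proof.
elim: l => [|l IH] lk; first by rewrite expr0 mul1mx; exact: in_span_b.
by rewrite exprS -mulmxA; apply/in_span_mulmx/IH/ltnW.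
Qed.

Lemma in_krylov_span m x : (m <= k)%N -> in_krylov A b m x -> in_span m x.
Proof.
move=> mk [c ->].
have -> : krylov_mx A b m *m c = \sum_(l < m) c l 0 *: (A ^+ l *m b).
  apply/matrixP => i j; rewrite !mxE summxE; apply: eq_bigr => l _.
  by rewrite !mxE (ord1 j) mulrC.
apply: in_span_sum => l _; apply/in_spanZ/(in_span_widen (ltn_ord l)).
by apply: in_span_krylov_vec; rewrite (leq_trans _ mk) // ltnW.
Qed.

Lemma Qmx_mulmx m (y : 'cV[C]_m) : Qmx q m *m y = \sum_(l < m) y l 0 *: q l.
Proof.
apply/matrixP => i j; rewrite !mxE summxE; apply: eq_bigr => l _.
by rewrite !mxE (ord1 j) mulrC.
Qed.

Lemma in_span_Qmx m (y : 'cV[C]_m) : in_span m (Qmx q m *m y).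
Proof.
by rewrite Qmx_mulmx; apply: in_span_sum => l _; exact/in_spanZ/in_span_q.
Qed.

Lemma Qmx_mulmx_inj m (y : 'cV[C]_m.+1) :
  (m <= k)%N -> Qmx q m.+1 *m y = 0 -> y = 0.
Proof.
move=> mk Qy0; apply/matrixP => l j; rewrite (ord1 j) mxE.
pose s i := if (i < m.+1)%N then y (inord i) 0 else 0.
have := cdot_q_lincomb s (mk : m.+1 <= k.+1)%N (leq_trans (leq_ord l) mk).
rewrite /s ltn_ord inord_val => <-.
transitivity (cdot (q l) (Qmx q m.+1 *m y)); last by rewrite Qy0 cdot0r.
rewrite Qmx_mulmx; congr cdot.
by apply: eq_bigr => i _; rewrite ltn_ord inord_val.
Qed.

Lemma in_span_orth_line m z : (m <= k)%N -> in_span m.+1 z ->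
  (forall p, (p < m)%N -> cdot (q p) z = 0) -> z = cdot (q m) z *: q m.
Proof.
move=> mk zs z_orth; rewrite {1}(in_span_expand _ zs) // big_ord_recr /=.
by rewrite big1 ?add0r // => i _; rewrite z_orth ?scale0r.
Qed.

Lemma cdot_q_Aq i l : (i <= k)%N -> (l < k)%N ->
  cdot (q i) (A *m q l) = h i l.
Proof.
move=> ik lk; rewrite arnoldi_mulmx //.
by rewrite (cdot_q_lincomb (fun j => h j l)) // ltnS ik.
Qed.

Lemma cdot_q_AQmx m (y : 'cV[C]_m.+1) (p : 'I_m.+1) : (m < k)%N ->
  cdot (q p) (A *m (Qmx q m.+1 *m y)) = (Hmx h m.+1 *m y) p 0.
Proof.
move=> mk; rewrite Qmx_mulmx mulmx_sumr cdot_sumr !mxE; apply: eq_bigr => l _.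
rewrite -scalemxAr cdotZr cdot_q_Aq ?mxE 1?mulrC //.
  exact: leq_trans (ltn_ord p : p <= m)%N (ltnW mk).
exact: leq_trans (ltn_ord l) mk.
Qed.

(* [hess_lker m] is the left null vector of H_(m+1,m) with first entry 1: each
   new entry is chosen to annihilate the next column, dividing by its nonzero
   subdiagonal entry. *)
Fixpoint hess_lker (m : nat) : nat -> C :=
  if m is m'.+1 then
    fun i => if i == m then - (\sum_(p < m) hess_lker m' p * h p m') / h m m'
             else hess_lker m' i
  else fun i => (i == 0)%:R.

Lemma hess_lker_stable m l i : (l <= m)%N -> (i <= l)%N ->
  hess_lker m i = hess_lker l i.
Proof.
elim: m => [|m IH]; first by rewrite leqn0 => /eqP ->.
rewrite leq_eqVlt ltnS => /predU1P[-> //|lm il] /=.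
by rewrite ifN_eq ?IH // neq_ltn ltnS (leq_trans il lm).
Qed.

Lemma hess_lker0 m : hess_lker m 0 = 1.
Proof. by elim: m. Qed.

Lemma hess_lker_mulh m l : (l < m)%N -> (m <= k)%N ->
  \sum_(i < m.+1) hess_lker m i * h i l = 0.
Proof.
move=> lm mk; have lk := leq_trans lm mk.
rewrite (@sumr_ord_trunc _ (fun i => hess_lker m i * h i l) l.+2)
  => [|//|i /andP[li _]]; last by rewrite arnoldi_h_eq0 ?mulr0.
under eq_bigr => i _ do rewrite (hess_lker_stable lm (ltn_ord i)).
rewrite big_ord_recr /= eqxx.
under eq_bigr => i _ do rewrite ifN_eq ?neq_ltn ?ltn_ord //.
by rewrite divfK ?subrr // gt_eqF ?arnoldi_h_gt0.
Qed.

Definition lker_vec m := \sum_(i < m.+1) (hess_lker m i)^* *: q i.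

Lemma cdot_lker_vec m x :
  cdot (lker_vec m) x = \sum_(i < m.+1) hess_lker m i * cdot (q i) x.
Proof. by rewrite cdot_suml; apply: eq_bigr => i _; rewrite cdotZl conjCK. Qed.

Lemma cdot_lker_vec_q m p : (p <= m)%N -> (m <= k)%N ->
  cdot (lker_vec m) (q p) = hess_lker m p.
Proof.
move=> pm mk; have pk := leq_trans pm mk.
transitivity (\sum_(i < m.+1) hess_lker m i * (p == i :> nat)%:R).
  rewrite cdot_lker_vec; apply: eq_bigr => i _.
  by rewrite arnoldi_cdot_q ?(leq_trans (leq_ord i) mk) // eq_sym.
by rewrite sumr_delta ltnS pm.
Qed.

Lemma cdot_lker_vec_b m : (m <= k)%N -> cdot (lker_vec m) b = beta%:C%C.
Proof.
by move=> mk; rewrite {1}b_scale_q0 cdotZr cdot_lker_vec_q // hess_lker0 mulr1.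
Qed.

(* [lker_vec m] spans the orthogonal complement of A K_m in K_(m+1). *)
Lemma cdot_lker_vec_A m x : (m <= k)%N -> in_span m x ->
  cdot (lker_vec m) (A *m x) = 0.
Proof.
move=> mk [s ->]; rewrite mulmx_sumr cdot_sumr big1 // => l _.
rewrite -scalemxAr cdotZr cdot_lker_vec.
transitivity (s l * \sum_(i < m.+1) hess_lker m i * h i l).
  congr (_ * _); apply: eq_bigr => i _.
  by rewrite cdot_q_Aq ?(leq_trans (ltn_ord l) mk) ?(leq_trans (leq_ord i) mk).
by rewrite hess_lker_mulh ?mulr0.
Qed.

Lemma vnorm_lker_vec m : (m <= k)%N ->
  vnorm (lker_vec m) = Num.sqrt (\sum_(i < m.+1) cmod (hess_lker m i) ^+ 2).
Proof.
move=> mk; apply: vnorm_cdot; first exact: sqrtr_ge0.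
rewrite sqr_sqrtr ?sumr_ge0 // => [|i _]; last exact: sqr_ge0.
rewrite cdot_lker_vec rmorph_sum; apply: eq_bigr => i _.
rewrite /lker_vec (cdot_q_lincomb (fun j => (hess_lker m j)^*)) //.
  by rewrite ltn_ord /= cmod_sqr mulrC.
exact: leq_trans (leq_ord i) mk.
Qed.

Hypothesis A_unit : A \in unitmx.

(* If H_(m+1) y = 0 then A Q_(m+1) y is a multiple of [q m.+1] by the
   Arnoldi relation; [lker_vec m.+1] pairs it to zero, so it vanishes. *)
Lemma Hmx_unit m : (m < k)%N -> hess_lker m.+1 m.+1 != 0 ->
  Hmx h m.+1 \in unitmx.
Proof.
move=> mk g_neq0; rewrite -unitmx_tr unitmxE unitfE.
apply/negP => /det0P[v v_neq0].
rewrite -[v]trmxK -trmx_mul -trmx0 => /trmx_inj Hy0; set y := v^T in Hy0.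
set w := A *m (Qmx q m.+1 *m y).
have w_orth p : (p < m.+1)%N -> cdot (q p) w = 0.
  by move=> pm; rewrite (cdot_q_AQmx y (Ordinal pm)) // Hy0 mxE.
have w_line : w = cdot (q m.+1) w *: q m.+1.
  exact: in_span_orth_line mk (in_span_mulmx mk (in_span_Qmx y)) w_orth.
have w0 : w = 0.
  have := cdot_lker_vec_A mk (in_span_Qmx y); rewrite -/w {1}w_line.
  rewrite cdotZr cdot_lker_vec_q // => /eqP.
  by rewrite mulf_eq0 (negbTE g_neq0) orbF => /eqP c0; rewrite w_line c0 scale0r.
have Qy0 : Qmx q m.+1 *m y = 0.
  by rewrite -(mulKmx A_unit (Qmx q m.+1 *m y)) -/w w0 mulmx0.
by move: v_neq0; rewrite -[v]trmxK -/y (Qmx_mulmx_inj (ltnW mk) Qy0) trmx0 eqxx.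
Qed.

Definition fom_residual j := b - A *m fom_iterate b q h j.

Lemma fom_residual0 : fom_residual 0 = b.
Proof.
rewrite /fom_residual /fom_iterate [Qmx q 0]thinmx0 mul0mx.
by rewrite scaler0 mulmx0 subr0.
Qed.

(* The Galerkin condition H_m y = e_1 makes the FOM residual orthogonal to
   K_m, so it is a multiple of [q m]; pairing with [lker_vec m] reads off the
   coefficient. *)
Lemma fom_residual_norm m : (m <= k)%N -> hess_lker m m != 0 ->
  cmod (hess_lker m m) * vnorm (fom_residual m) = beta.
Proof.
case: m => [|m] mk g_neq0.
  by rewrite fom_residual0 hess_lker0 cmodR normr1 mul1r.
have H_unit := Hmx_unit mk g_neq0.
set y := invmx (Hmx h m.+1) *m e1 R m.+1.
have Hy : Hmx h m.+1 *m y = e1 R m.+1 by rewrite mulKVmx.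
have r_eq : fom_residual m.+1 = b - beta%:C%C *: (A *m (Qmx q m.+1 *m y)).
  by rewrite /fom_residual /fom_iterate -/y -scalemxAr.
have r_span : in_span m.+2 (fom_residual m.+1).
  rewrite r_eq; apply: in_spanB; first exact: (in_span_widen _ in_span_b).
  exact/in_spanZ/in_span_mulmx/in_span_Qmx.
have r_orth p : (p < m.+1)%N -> cdot (q p) (fom_residual m.+1) = 0.
  move=> pm; rewrite r_eq cdotBr cdotZr (cdot_q_AQmx y (Ordinal pm)) // Hy mxE.
  rewrite {1}b_scale_q0 cdotZr arnoldi_cdot_q ?subrr //.
  exact: leq_trans (pm : (p <= m)%N) (ltnW mk).
have r_line := in_span_orth_line mk r_span r_orth.
set c := cdot (q m.+1) _ in r_line.
have cg : c * hess_lker m.+1 m.+1 = beta%:C%C.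
  rewrite -cdot_lker_vec_q // -cdotZr -r_line r_eq cdotBr cdot_lker_vec_b //.
  by rewrite cdotZr cdot_lker_vec_A ?mulr0 ?subr0 //; exact: in_span_Qmx.
rewrite r_line vnormZ vnorm_q // mulr1 -cmodM mulrC cg cmodR ger0_norm //.
exact: vnorm_ge0.
Qed.

Lemma fom_err_residual j : (j <= k)%N -> hess_lker k j != 0 ->
  fom_err A b q h j = (vnorm (invmx A *m fom_residual j))%:E.
Proof.
case: j => [|m] mk g_neq0; first by rewrite fom_residual0.
rewrite (hess_lker_stable (l := m.+1)) // in g_neq0.
by rewrite /fom_err /= Hmx_unit // /fom_residual mulmxBr mulKmx.
Qed.

Lemma gmres_residual_ge xG : is_gmres_iterate A b k xG ->
  beta <= vnorm (lker_vec k) * vnorm (b - A *m xG).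
Proof.
case=> /(in_krylov_span (leqnn k)) xG_span _.
have := cdot_cauchy_schwarz (lker_vec k) (b - A *m xG).
rewrite cdotBr cdot_lker_vec_b // cdot_lker_vec_A // subr0 cmodR.
by rewrite ger0_norm ?vnorm_ge0.
Qed.

(* The witness is an index maximising [cmod (hess_lker k j)]. *)
Lemma exists_fom_residual_le xG : is_gmres_iterate A b k xG ->
  exists2 j : 'I_k.+1,
    fom_err A b q h j = (vnorm (invmx A *m fom_residual j))%:E &
    vnorm (fom_residual j) <= Num.sqrt (k.+1)%:R * vnorm (b - A *m xG).
Proof.
move=> xG_gmres; set g := fun j : 'I_k.+1 => cmod (hess_lker k j).
have [j _ g_max] := @arg_maxP _ _ _ ord0 xpredT g isT.
have g_ge1 : 1 <= g j.
  by have := g_max ord0 isT; rewrite /g hess_lker0 cmodR normr1.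
have g_gt0 : 0 < g j := lt_le_trans ltr01 g_ge1.
have gkj_neq0 : hess_lker k j != 0 by rewrite -cmod_eq0 gt_eqF.
have jk : (j <= k)%N := leq_ord j.
exists j; first by rewrite fom_err_residual.
have gjj : hess_lker k j = hess_lker j j := hess_lker_stable jk (leqnn j).
rewrite -(ler_pM2l g_gt0) {1}/g gjj fom_residual_norm //; last by rewrite -gjj.
apply: le_trans (gmres_residual_ge xG_gmres) _.
rewrite mulrA [g j * _]mulrC ler_wpM2r ?vnorm_ge0 // vnorm_lker_vec //.
by apply: sqrt_sum_sqr_le => i; rewrite ger0_norm ?cmod_ge0 //; exact: g_max.
Qed.

End Arnoldi.

Theorem mainTheorem4 (R : realType) (n : nat) (A : 'M[R[i]]_n)
    (b : 'cV[R[i]]_n) (k : nat)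
    (q : nat -> 'cV[R[i]]_n) (h : nat -> nat -> R[i]) (xG : 'cV[R[i]]_n) :
  A \in unitmx -> b != 0 -> (1 <= k)%N ->
  \rank (krylov_mx A b k.+1) = k.+1 ->
  arnoldi A b k q h ->
  is_gmres_iterate A b k xG ->
  (\big[Order.min/+oo%E]_(j < k.+1) fom_err A b q h j
     <= (Num.sqrt (k.+1)%:R * kappa A * vnorm (invmx A *m b - xG))%:E)%E.
Proof.
(* [b != 0] and the dimension of K_(k+1) already follow from [arnoldi]. *)
move=> A_unit _ _ _ arn xG_gmres.
have [j fom_err_j rF_le] := exists_fom_residual_le arn A_unit xG_gmres.
apply: le_trans (bigmin_le _ j _) _; rewrite fom_err_j lee_fin.
have rG_le : vnorm (b - A *m xG) <= opnorm A * vnorm (invmx A *m b - xG).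
  by rewrite -{1}(mulKVmx A_unit b) -mulmxBr vnorm_mulmx_le.
have invA_ge0 := opnorm_ge0 (invmx A) (vnorm_q arn (leq0n k)).
set eG := vnorm (invmx A *m b - xG).
have -> : Num.sqrt k.+1%:R * kappa A * eG =
    opnorm (invmx A) * (Num.sqrt k.+1%:R * (opnorm A * eG)).
  by rewrite /kappa [opnorm A * _]mulrC !mulrA [Num.sqrt _ * opnorm _]mulrC.
apply: le_trans (vnorm_mulmx_le _ _) (ler_wpM2l invA_ge0 _).
by apply: le_trans rF_le (ler_wpM2l (sqrtr_ge0 _) rG_le).
Qed.
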